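(* Fix $h$ in the interior of $\mathcal H$. Let $\eta$ be a Borel probability measure on $\mathcal Y_h$ with finite first moment and $\int y\,\eta(dy)=0$. Define the measure $\rho:=(S_h)_\#\bigl((1-h^\top y)\,\eta(dy)\bigr)$ on $\mathcal X_d$. Then $\rho\in\mathfrak M_d$, the measure $q_h(dx):=(1+h^\top x)\rho(dx)$ satisfies $(T_h)_\#q_h=\eta$, and $\rho$ is the unique element $\rho'\in\mathfrak M_d$ whose fiber $(T_h)_\#\bigl((1+h^\top x)\rho'(dx)\bigr)$ equals $\eta$.
   Context: Fix an integer $d\ge 2$. Let $H\in\mathbb R^{d\times(d-1)}$ have orthonormal columns spanning $T_d:=\{u\in\mathbb R^d:\mathbf 1^\top u=0\}$, and set $\gamma_i:=H^\top e_i\in\mathbb R^{d-1}$ ($i=1,\dots,d$). Let $\mathcal X_d:=\{x\in\mathbb R^{d-1}:1+\gamma_i^\top x\ge0\ \forall i\}$ and $\mathcal H:=\mathrm{conv}\{\gamma_1,\dots,\gamma_d\}$. An anchored law is a Borel probability measure $\rho$ on $\mathcal X_d$ with $\int x\,\rho(dx)=0$; $\mathfrak M_d$ is the set of anchored laws. For $h\in\mathcal H$ define $\mathcal Y_h:=\{y\in\mathbb R^{d-1}:1+(\gamma_i-h)^\top y\ge 0\ \forall i\}$, $T_h(x):=x/(1+h^\top x)$ for $x\in\mathcal X_d$ with $1+h^\top x>0$, and $S_h(y):=y/(1-h^\top y)$ for $y\in\mathcal Y_h$ (one has $1-h^\top y>0$ on $\mathcal Y_h$). *)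

From HB Require Import structures.
From mathcomp Require Import all_boot all_order all_algebra.
From mathcomp Require Import all_classical all_reals all_analysis.
Set Implicit Arguments. Unset Strict Implicit. Unset Printing Implicit Defensive.
Import Order.TTheory GRing.Theory Num.Theory.
Local Open Scope classical_set_scope.
Local Open Scope ring_scope.

(* Points of R^(d-1) are represented as (d.-1).-tuples of reals; this type
   carries the library's product (= Borel) sigma-algebra. *)
Notation pt R n := (n.-tuple R).

Section Defs.
Variable R : realType.

Definition dot n (u v : pt R n) : R := \sum_(j < n) tnth u j * tnth v j.

Definition tscale n (c : R) (y : pt R n) : pt R n := map_tuple (fun a => c * a) y.

Variable d : nat.

Definition orthonormal_cols (H : 'M[R]_(d, d.-1)) : Prop := H^T *m H = 1%:M.
Definition spans_Td (H : 'M[R]_(d, d.-1)) : Prop :=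
  forall u : 'cV[R]_d, (\sum_(i < d) u i ord0 = 0) <-> exists c : 'cV[R]_(d.-1), u = H *m c.

(* gamma_i = H^T e_i, i.e. the i-th row of H, as a point of R^(d-1). *)
Definition gamma (H : 'M[R]_(d, d.-1)) (i : 'I_d) : pt R d.-1 :=
  mktuple (fun j => H i j).

Definition Xd (H : 'M[R]_(d, d.-1)) : set (pt R d.-1) :=
  [set x | forall i, 0 <= 1 + dot (gamma H i) x].

Definition convH (H : 'M[R]_(d, d.-1)) : set (pt R d.-1) :=
  [set h | exists lam : 'I_d -> R, (forall i, 0 <= lam i) /\ \sum_(i < d) lam i = 1 /\
     forall j, tnth h j = \sum_(i < d) lam i * tnth (gamma H i) j].

(* interior of conv{gamma_i} in R^(d-1) (with the product topology,
   i.e. the Euclidean one): some open cube around h lies in the hull. *)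
Definition interiorH (H : 'M[R]_(d, d.-1)) : set (pt R d.-1) :=
  [set h | exists2 e : R, 0 < e &
     forall z : pt R d.-1, (forall j, `|tnth z j - tnth h j| < e) -> convH H z].

Definition Yh (H : 'M[R]_(d, d.-1)) (h : pt R d.-1) : set (pt R d.-1) :=
  [set y | forall i, 0 <= 1 + (dot (gamma H i) y - dot h y)].

(* T_h(x) = x / (1 + h^T x)  (used only where 1 + h^T x > 0) *)
Definition Th (h : pt R d.-1) (x : pt R d.-1) : pt R d.-1 :=
  tscale (1 + dot h x)^-1 x.
(* S_h(y) = y / (1 - h^T y)  (used only on Y_h, where 1 - h^T y > 0) *)
Definition Sh (h : pt R d.-1) (y : pt R d.-1) : pt R d.-1 :=
  tscale (1 - dot h y)^-1 y.

Definition anchored (H : 'M[R]_(d, d.-1)) (rho : probability (pt R d.-1) R) : Prop :=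
  rho (Xd H) = 1%E /\
  forall j : 'I_d.-1,
    rho.-integrable (Xd H) (fun x => (tnth x j)%:E) /\
    (\int[rho]_(x in Xd H) (tnth x j)%:E = 0)%E.

(* The fiber (T_h)_# ((1 + h^T x) rho(dx)) equals eta: for every Borel B,
   int_{x in X_d, 1 + h^T x > 0, T_h x in B} (1 + h^T x) rho(dx) = eta(B). *)
Definition fiber_is (H : 'M[R]_(d, d.-1)) (h : pt R d.-1)
    (rho eta : probability (pt R d.-1) R) : Prop :=
  forall B : set (pt R d.-1), measurable B ->
    (\int[rho]_(x in [set x | Xd H x /\ (0 < 1 + dot h x)%R /\ B (Th h x)])
        (1 + dot h x)%R%:E)%E = eta B.

Definition rho_of (H : 'M[R]_(d, d.-1)) (h : pt R d.-1)
    (eta : probability (pt R d.-1) R) (A : set (pt R d.-1)) : \bar R :=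
  (\int[eta]_(y in [set y | Yh H h y /\ A (Sh h y)]) (1 - dot h y)%R%:E)%E.

End Defs.

From HB Require Import structures.
From mathcomp Require Import all_boot all_order all_algebra.
From mathcomp Require Import all_classical all_reals all_analysis.
From mathcomp Require Import measurable_realfun.
From mathcomp.algebra_tactics Require Import ring lra.
Set Implicit Arguments. Unset Strict Implicit. Unset Printing Implicit Defensive.
Import Order.TTheory GRing.Theory Num.Theory.
Local Open Scope classical_set_scope.
Local Open Scope ring_scope.

(* S_h and T_h are inverse bijections between Y_h and the part of X_d where
   1 + h^T x > 0, with 1 + h^T (S_h y) = (1 - h^T y)^-1.  That 1 - h^T y > 0 on
   Y_h follows by summing the constraints defining Y_h: the gamma_i sum to 0 and
   jointly determine y.
   Existence: rho is the image under S_h of the law (1 - h^T y) eta(dy), a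
   probability because eta is centred.  Reweighting rho by
   1 + h^T x = (1 - h^T y)^-1 cancels the weight, so the fiber is eta; and since
   (1 - h^T y) S_h y = y, positively homogeneous functions of a coordinate (the
   norm, the positive and negative parts) have equal rho- and eta-integrals,
   which gives integrability and zero mean.
   Uniqueness: if rho' has fiber eta, the same change of variables read
   backwards gives rho' (A `&` {1 + h^T x > 0}) = rho_of A; for A = setT this
   shows that rho' is carried by {1 + h^T x > 0}. *)

Section density_measure.
Context d (T : measurableType d) (R : realType) (mu : {measure set T -> \bar R}).
Local Open Scope ereal_scope.

(* [mg] and [g_ge0] do not occur in the body: they are arguments so that the
   measure instance below applies to every [density_measure mg g_ge0]. *)
Definition density_measure (g : T -> R) (mg : measurable_fun setT g)
    (g_ge0 : forall x, (0 <= g x)%R) : set T -> \bar R :=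
  fun A => \int[mu]_(x in A) (g x)%:E.

Variables (g : T -> R) (mg : measurable_fun setT g) (g_ge0 : forall x, (0 <= g x)%R).
Local Notation nu := (density_measure mg g_ge0).

Let nu0 : nu set0 = 0. Proof. exact: integral_set0. Qed.

Let nu_ge0 A : 0 <= nu A.
Proof. by apply: integral_ge0 => x _; rewrite lee_fin. Qed.

Let nu_sigma_additive : semi_sigma_additive nu.
Proof. by apply: semi_sigma_additive_nng_induced => //; exact/measurable_EFinP. Qed.

HB.instance Definition _ := isMeasure.Build _ _ _ nu nu0 nu_ge0 nu_sigma_additive.

Lemma integral_density_measure_indic A : measurable A ->
  \int[nu]_x (\1_A x)%:E = \int[mu]_x ((\1_A x)%:E * (g x)%:E).
Proof.
move=> mA; rewrite integral_indic // setIT.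
transitivity (\int[mu]_(x in A) (g x)%:E) => //.
by rewrite integral_mkcond; apply: eq_integral => x _; rewrite epatch_indic /= muleC.
Qed.

Import HBNNSimple.

Lemma integral_density_measure_nnsfun (s : {nnsfun T >-> R}) :
  \int[nu]_x (s x)%:E = \int[mu]_x ((s x)%:E * (g x)%:E).
Proof.
have s_sum x : (s x)%:E = \sum_(r \in range s) r%:E * (\1_(s @^-1` [set r]) x)%:E.
  by rewrite fimfunE -fsumEFin //; apply: eq_fsbigr => r _; rewrite EFinM.
have r_ge0 r : r \in range s -> (0 <= r)%R.
  by rewrite inE => -[x _ <-].
under [LHS]eq_integral do rewrite s_sum.
under [RHS]eq_integral => x _.
  rewrite s_sum ge0_mule_fsuml => [|r]; last exact: nnfun_muleindic_ge0.
  over.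
have mindic r : measurable_fun setT (fun x => r%:E * (\1_(s @^-1` [set r]) x)%:E).
  by apply/measurable_EFinP; exact: measurable_funM.
rewrite ge0_integral_fsum //; last by move=> r x _; exact: nnfun_muleindic_ge0.
rewrite ge0_integral_fsum //; first last.
- by move=> r x _; rewrite mule_ge0 ?nnfun_muleindic_ge0 ?lee_fin.
- by move=> r; apply: emeasurable_funM => //; exact/measurable_EFinP.
apply: eq_fsbigr => r rs; have r0 := r_ge0 r rs.
have mA : measurable (s @^-1` [set r]) by exact: measurable_funPTI.
rewrite ge0_integralZl_EFin //; last exact/measurable_EFinP/measurable_indic.
under [RHS]eq_integral do rewrite -muleA.
rewrite ge0_integralZl_EFin ?integral_density_measure_indic //.
- by move=> x _; rewrite mule_ge0 ?lee_fin.
- by apply: emeasurable_funM; apply/measurable_EFinP => //; exact: measurable_indic.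
Qed.

Lemma ge0_integral_density_measure (F : T -> \bar R) :
    measurable_fun setT F -> (forall x, 0 <= F x) ->
  \int[nu]_x F x = \int[mu]_x (F x * (g x)%:E).
Proof.
move=> mF F0; pose s := nnsfun_approx measurableT mF.
have s_cvg x : (s n x)%:E @[n --> \oo] --> F x.
  exact: cvg_nnsfun_approx.
have s_nd x : nondecreasing_seq (fun n => (s n x)%:E).
  by move=> m n mn; rewrite lee_fin; exact/lefP/nd_nnsfun_approx.
have ms n : measurable_fun setT (fun x => (s n x)%:E).
  exact/measurable_EFinP/measurable_funP.
transitivity (limn (fun n => \int[nu]_x (s n x)%:E)).
  rewrite -monotone_convergence //; last by move=> n x _; rewrite lee_fin.
  by apply: eq_integral => x _; apply/esym/cvg_lim.
transitivity (limn (fun n => \int[mu]_x ((s n x)%:E * (g x)%:E))).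
  by under eq_fun do rewrite integral_density_measure_nnsfun.
rewrite -monotone_convergence //.
- apply: eq_integral => x _; apply/cvg_lim => //.
  by apply: cvgeZr => //; exact: s_cvg.
- by move=> n; apply: emeasurable_funM => //; exact/measurable_EFinP.
- by move=> n x _; rewrite mule_ge0 ?lee_fin.
- by move=> x _ m n mn; rewrite lee_wpmul2r ?lee_fin //; exact: s_nd.
Qed.

End density_measure.

Lemma mnormalize_id1 d (T : measurableType d) (R : realType)
    (mu : {measure set T -> \bar R}) (P : probability T R) :
  mu setT = 1%E -> mnormalize mu P = mu.
Proof.
by move=> mu1; apply/funext => A; rewrite /mnormalize mu1 onee_eq0 /= invr1 mule1.
Qed.

Section push_density.
Context d d' (T : measurableType d) (T' : measurableType d') (R : realType).
Local Open Scope ereal_scope.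

(* [mnormalize] only makes the result a probability; it is the identity as
   soon as [g] has mass 1. *)
Definition push_density (P : probability T R) (g : T -> R) (mg : measurable_fun setT g)
    (g_ge0 : forall x, (0 <= g x)%R) (f : {mfun T >-> T'}) : probability T' R :=
  distribution (mnormalize (density_measure P mg g_ge0) P) f.

Variables (P : probability T R) (g : T -> R) (mg : measurable_fun setT g).
Variables (g_ge0 : forall x, (0 <= g x)%R) (f : {mfun T >-> T'}).
Hypothesis g1 : \int[P]_x (g x)%:E = 1.
Local Notation Q := (push_density P mg g_ge0 f).

Let normalized : mnormalize (density_measure P mg g_ge0) P = density_measure P mg g_ge0.
Proof. exact: mnormalize_id1. Qed.

Lemma push_densityE A : Q A = \int[P]_(x in f @^-1` A) (g x)%:E.
Proof. by rewrite /= /pushforward normalized. Qed.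

Lemma ge0_integral_push_density (F : T' -> \bar R) :
    measurable_fun setT F -> (forall y, 0 <= F y) ->
  \int[Q]_y F y = \int[P]_x (F (f x) * (g x)%:E).
Proof.
move=> mF F0; rewrite ge0_integral_distribution //= normalized.
rewrite ge0_integral_density_measure //; apply: measurableT_comp => //.
Qed.

End push_density.

Section probability_full_set.
Context d (T : measurableType d) (R : realType) (P : probability T R).
Local Open Scope ereal_scope.

Lemma probability_setI_full (A B : set T) : measurable A -> measurable B ->
  P B = 1 -> P A = P (A `&` B).
Proof.
move=> mA mB PB1; rewrite (measureDI P mA mB) [X in X + _](_ : _ = 0) ?add0e //.
apply: (@subset_measure0 _ _ _ P _ (~` B)) => //; first exact: measurableD.
- exact: measurableC.
- by have := probability_setC P mB; rewrite PB1 subee.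
Qed.

Lemma eq_integral_full (A : set T) (f1 f2 : T -> \bar R) :
    measurable A -> P A = 1 -> measurable_fun setT f1 -> measurable_fun setT f2 ->
  (forall x, A x -> f1 x = f2 x) -> \int[P]_x f1 x = \int[P]_x f2 x.
Proof.
move=> mA PA1 mf1 mf2 f12; apply: ae_eq_integral => //.
exists (~` A); split; first exact: measurableC.
- by have := probability_setC P mA; rewrite PA1 subee.
- by move=> x /= nf12 Ax; apply: nf12 => _; exact: f12.
Qed.

End probability_full_set.

Section tscale.
Context (R : realType) (n : nat).
Implicit Types (u y : pt R n) (c : R).

Lemma tnth_tscale c y j : tnth (tscale c y) j = c * tnth y j.
Proof. exact: tnth_map. Qed.

Lemma dot_tscale u c y : dot u (tscale c y) = c * dot u y.
Proof. by rewrite /dot mulr_sumr; apply: eq_bigr => j _; rewrite tnth_tscale mulrCA. Qed.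

Lemma tscaleA c c' y : tscale c (tscale c' y) = tscale (c * c') y.
Proof. by apply: eq_from_tnth => j; rewrite !tnth_tscale mulrA. Qed.

Lemma tscale1 y : tscale 1 y = y.
Proof. by apply: eq_from_tnth => j; rewrite tnth_tscale mul1r. Qed.

End tscale.

Section simplex_geometry.
Context (R : realType) (d : nat) (H : 'M[R]_(d, d.-1)).
Hypothesis d_gt0 : (0 < d)%N.
Hypothesis Horth : orthonormal_cols H.
Hypothesis Hspan : spans_Td H.

Lemma sum_dot_gamma y : \sum_(i < d) dot (gamma H i) y = 0.
Proof.
have col_sum0 j : \sum_(i < d) H i j = 0.
  have /(proj2 (Hspan (col j H))) : exists c, col j H = H *m c.
    by exists (delta_mx j 0); exact: colE.
  by under eq_bigr do rewrite mxE.
rewrite /dot exchange_big big1 // => j _.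
by rewrite -mulr_suml; under eq_bigr do rewrite tnth_mktuple; rewrite col_sum0 mul0r.
Qed.

Lemma dot_gamma_eq0 y : (forall i, dot (gamma H i) y = 0) -> forall j, tnth y j = 0.
Proof.
move=> y_perp j; pose yc : 'cV[R]_(d.-1) := \col_j tnth y j.
have Hy0 : H *m yc = 0.
  apply/matrixP => i k; rewrite !mxE; transitivity (dot (gamma H i) y) => //.
  by apply: eq_bigr => l _; rewrite !mxE tnth_mktuple.
have : yc = 0 by rewrite -[yc]mul1mx -Horth -mulmxA Hy0 mulmx0.
by move/matrixP/(_ j 0); rewrite !mxE.
Qed.

Lemma sum_Yh_constraints (h y : pt R d.-1) :
  \sum_(i < d) (1 + (dot (gamma H i) y - dot h y)) = d%:R * (1 - dot h y).
Proof.
rewrite big_split big_split /= sum_dot_gamma !sumr_const card_ord add0r.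
by rewrite mulrBr mulr1 mulr_natl mulNrn.
Qed.

Lemma Yh_gt0 (h y : pt R d.-1) : Yh H h y -> 0 < 1 - dot h y.
Proof.
move=> Yy; have d_pos : 0 < d%:R :> R by rewrite ltr0n.
rewrite lt_neqAle -(pmulr_rge0 _ d_pos) -sum_Yh_constraints sumr_ge0 // andbT.
apply/eqP => hy1.
have all0 : \sum_(i < d) (1 + (dot (gamma H i) y - dot h y)) = 0.
  by rewrite sum_Yh_constraints -hy1 mulr0.
have y_perp i : dot (gamma H i) y = 0.
  move/eqP: all0; rewrite psumr_eq0 // => /allP/(_ i (mem_index_enum _))/eqP.
  lra.
have := congr1 (dot h) (erefl y); rewrite {2}/dot big1 => [|j _]; last first.
  by rewrite (dot_gamma_eq0 y_perp) mulr0.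
lra.
Qed.

Variable h : pt R d.-1.

Lemma dot_Sh y : Yh H h y -> 1 + dot h (Sh h y) = (1 - dot h y)^-1.
Proof.
by move=> /Yh_gt0 hy; rewrite /Sh dot_tscale; field; rewrite gt_eqF.
Qed.

Lemma dot_Th x : 0 < 1 + dot h x -> 1 - dot h (Th h x) = (1 + dot h x)^-1.
Proof. by move=> hx; rewrite /Th dot_tscale; field; rewrite gt_eqF. Qed.

Lemma ThK y : Yh H h y -> Th h (Sh h y) = y.
Proof.
move=> Yy; have hy := Yh_gt0 Yy.
by rewrite /Th dot_Sh // /Sh tscaleA invrK mulfV ?tscale1 ?gt_eqF.
Qed.

Lemma ShK x : 0 < 1 + dot h x -> Sh h (Th h x) = x.
Proof.
by move=> hx; rewrite /Sh dot_Th // /Th tscaleA invrK mulfV ?tscale1 ?gt_eqF.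
Qed.

Lemma Sh_Xd y : Yh H h y -> Xd H (Sh h y).
Proof.
move=> Yy i; have hy := Yh_gt0 Yy; rewrite /Sh dot_tscale.
have -> : 1 + (1 - dot h y)^-1 * dot (gamma H i) y =
    (1 - dot h y)^-1 * (1 + (dot (gamma H i) y - dot h y)).
  by field; rewrite gt_eqF.
by apply: mulr_ge0; [rewrite invr_ge0 ltW | exact: Yy].
Qed.

Lemma Th_Yh x : Xd H x -> 0 < 1 + dot h x -> Yh H h (Th h x).
Proof.
move=> Xx hx i; rewrite /Th !dot_tscale.
have -> : 1 + ((1 + dot h x)^-1 * dot (gamma H i) x - (1 + dot h x)^-1 * dot h x) =
    (1 + dot h x)^-1 * (1 + dot (gamma H i) x) by field; rewrite gt_eqF.
by apply: mulr_ge0; [rewrite invr_ge0 ltW | exact: Xx].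
Qed.

End simplex_geometry.

Section measurability.
Context (R : realType).

Lemma measurable_invr : measurable_fun [set: R] GRing.inv.
Proof.
rewrite -(setUv [set 0]); apply/measurable_funU => //; first exact: measurableC.
split.
- move=> _ Y mY; have [Y0|Y0] := pselect (Y 0^-1).
    by rewrite (_ : _ `&` _ = [set 0]) //; apply/seteqP; split => x /= => [[]|->].
  by rewrite (_ : _ `&` _ = set0) //; apply/seteqP; split => x //= [->].
- apply: open_continuous_measurable_fun.
    exact/closed_openC/accessible_closed_set1/hausdorff_accessible.
  by move=> x; rewrite inE /= => /eqP x0; exact: inv_continuous.
Qed.

Lemma measurable_dot n (u : pt R n) : measurable_fun setT (dot u).
Proof.
by apply: measurable_sum => j; apply: measurable_funM => //; exact: measurable_tnth.
Qed.

Lemma measurable_tscale n (c : pt R n -> R) : measurable_fun setT c ->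
  measurable_fun setT (fun y => tscale (c y) y).
Proof.
move=> mc; apply/measurable_fun_tnthP => j.
under [_ \o _]funext do rewrite /= tnth_tscale.
by apply: measurable_funM => //; exact: measurable_tnth.
Qed.

Lemma measurable_forall_ge0 d (T : measurableType d) (I : finType) (f : I -> T -> R) :
  (forall i, measurable_fun setT (f i)) -> measurable [set x | forall i, 0 <= f i x].
Proof.
move=> mf; rewrite (_ : [set x | _] = \bigcap_(i in [set: I]) [set x | 0 <= f i x]).
  apply: fin_bigcap_measurable => // i _.
  by rewrite -[X in measurable X]setTI; exact: measurable_fun_ler.
by apply/seteqP; split => x /= fx0 i; [move=> _ |]; exact: fx0.
Qed.

End measurability.

Section measurable_Sh_Th.
Context {R : realType} {d : nat} (H : 'M[R]_(d, d.-1)) (h : pt R d.-1).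

Lemma measurable_Yh : measurable (Yh H h).
Proof.
apply: measurable_forall_ge0 => i.
by apply: measurable_funD => //; apply: measurable_funB; exact: measurable_dot.
Qed.

Lemma measurable_Xd : measurable (Xd H).
Proof.
by apply: measurable_forall_ge0 => i; apply: measurable_funD => //; exact: measurable_dot.
Qed.

Lemma measurable_Sh : measurable_fun setT (Sh h).
Proof.
apply: measurable_tscale; apply: measurableT_comp; first exact: measurable_invr.
by apply: measurable_funB => //; exact: measurable_dot.
Qed.

Lemma measurable_Th : measurable_fun setT (Th h).
Proof.
apply: measurable_tscale; apply: measurableT_comp; first exact: measurable_invr.
by apply: measurable_funD => //; exact: measurable_dot.
Qed.

Definition Th_dom : set (pt R d.-1) := [set x | Xd H x /\ 0 < 1 + dot h x].

Lemma measurable_Th_dom : measurable Th_dom.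
Proof.
apply: measurableI; first exact: measurable_Xd.
rewrite -[X in measurable X]setTI; apply: measurable_fun_ltr => //.
by apply: measurable_funD => //; exact: measurable_dot.
Qed.

Lemma fiber_domE B :
  [set x | Xd H x /\ 0 < 1 + dot h x /\ B (Th h x)] = Th_dom `&` Th h @^-1` B.
Proof. by apply/seteqP; split => x /= [] => [? []|[]]. Qed.

HB.instance Definition _ := isMeasurableFun.Build _ _ _ _ (Sh h) measurable_Sh.
HB.instance Definition _ := isMeasurableFun.Build _ _ _ _ (Th h) measurable_Th.

End measurable_Sh_Th.

Section existence.
Context (R : realType) (d : nat) (H : 'M[R]_(d, d.-1)) (h : pt R d.-1).
Hypothesis d_gt0 : (0 < d)%N.
Hypothesis Horth : orthonormal_cols H.
Hypothesis Hspan : spans_Td H.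
Variable eta : probability (pt R d.-1) R.
Hypothesis etaY : eta (Yh H h) = 1%E.
Hypothesis eta_mom : forall j : 'I_d.-1, eta.-integrable setT (fun y => (tnth y j)%:E).
Hypothesis eta_mean : forall j : 'I_d.-1, (\int[eta]_y (tnth y j)%:E = 0)%E.

Local Notation Y := (Yh H h).
Local Notation X := (Xd H).

Let Y_gt0 y : Y y -> 0 < 1 - dot h y. Proof. exact: Yh_gt0. Qed.
Let dot_Sh := dot_Sh d_gt0 Horth Hspan (h := h).
Let ThK := ThK d_gt0 Horth Hspan (h := h).
Let Sh_Xd := Sh_Xd d_gt0 Horth Hspan (h := h).

(* the weight 1 - h^T y, cut off outside Y_h so that it is nonnegative *)
Definition Sh_weight (y : pt R d.-1) : R := \1_Y y * (1 - dot h y).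

Lemma measurable_Sh_weight : measurable_fun setT Sh_weight.
Proof.
rewrite /Sh_weight.
apply: measurable_funM; first exact: measurable_indic (measurable_Yh H h).
by apply: measurable_funB => //; exact: measurable_dot.
Qed.

Lemma Sh_weight_ge0 y : 0 <= Sh_weight y.
Proof.
rewrite /Sh_weight indicE; have [/set_mem/Y_gt0/ltW|] := boolP (y \in Y).
  by rewrite mul1r.
by rewrite mul0r.
Qed.

Lemma Sh_weightE y : Y y -> Sh_weight y = 1 - dot h y.
Proof. by move=> Yy; rewrite /Sh_weight indicE mem_set // mul1r. Qed.

Local Open Scope ereal_scope.

Lemma integrable_dot (u : pt R d.-1) : eta.-integrable setT (fun y => (dot u y)%:E).
Proof.
under eq_fun do rewrite /dot -sumEFin.
apply: integrable_sum => // j _; under eq_fun do rewrite EFinM.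
exact: integrableZl.
Qed.

Lemma integral_dot (u : pt R d.-1) : \int[eta]_y (dot u y)%:E = 0.
Proof.
under eq_integral do rewrite /dot -sumEFin.
rewrite integral_sum // => [|j]; last first.
  by under eq_fun do rewrite EFinM; exact: integrableZl.
rewrite big1 // => j _; under eq_integral do rewrite EFinM.
by rewrite integralZl // eta_mean mule0.
Qed.

Lemma integral_Sh_weight : \int[eta]_y (Sh_weight y)%:E = 1.
Proof.
transitivity (\int[eta]_y (cst 1 \- (EFin \o dot h)) y).
  apply: (eq_integral_full (measurable_Yh H h) etaY).
  - by apply/measurable_EFinP; exact: measurable_Sh_weight.
  - by apply/emeasurable_funB; apply/measurable_EFinP => //; exact: measurable_dot.
  - by move=> y Yy; rewrite Sh_weightE.
rewrite integralB //.
- by rewrite integral_dot integral_cst // mul1e sube0; exact: probability_setT.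
- exact/(finite_measure_integrable_cst eta 1%R).
- exact: integrable_dot.
Qed.

Definition rho := push_density eta measurable_Sh_weight Sh_weight_ge0 (Sh h).

Lemma rhoE A : rho A = rho_of H h eta A.
Proof.
rewrite /rho push_densityE; last exact: integral_Sh_weight.
rewrite /rho_of integral_mkcond [RHS]integral_mkcond; apply: eq_integral => y _.
rewrite !epatch_indic /= /Sh_weight -!EFinM; congr EFin.
by rewrite (_ : [set y | _ /\ _] = Y `&` Sh h @^-1` A) // indicI /=; ring.
Qed.

Lemma rho_of_setT : rho_of H h eta setT = 1.
Proof. by rewrite -rhoE probability_setT. Qed.

Lemma rho_Xd : rho X = 1.
Proof.
rewrite /rho push_densityE; last exact: integral_Sh_weight.
rewrite integral_mkcond -integral_Sh_weight; apply: eq_integral => y _.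
rewrite epatch_indic /= /Sh_weight indicE; have [Yy|] := boolP (y \in Y).
  by rewrite indicE mem_set ?mule1 //=; apply: Sh_Xd; exact: set_mem.
by rewrite mul0r mul0e.
Qed.

Lemma integral_rho_homogeneous (phi : R -> R) j :
    (forall a, (0 <= phi a)%R) -> measurable_fun setT phi ->
    (forall c a, (0 < c)%R -> phi (c * a) = c * phi a)%R ->
  \int[rho]_(x in X) (phi (tnth x j))%:E = \int[eta]_y (phi (tnth y j))%:E.
Proof.
move=> phi_ge0 mphi phiZ; have mphij : measurable_fun setT (fun x => (phi (tnth x j))%:E).
  by apply/measurable_EFinP; apply: measurableT_comp => //; exact: measurable_tnth.
rewrite integral_mkcond /rho ge0_integral_push_density //; first last.
- by move=> x; apply: erestrict_ge0 => y _; rewrite lee_fin.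
- by apply/(measurable_restrictT _ (measurable_Xd H)); exact: measurable_funTS.
- exact: integral_Sh_weight.
apply: (eq_integral_full (measurable_Yh H h) etaY) => //.
- apply: emeasurable_funM.
    apply: measurableT_comp (measurable_Sh h) => //.
    by apply/(measurable_restrictT _ (measurable_Xd H)); exact: measurable_funTS.
  by apply/measurable_EFinP; exact: measurable_Sh_weight.
move=> y Yy; rewrite patchE mem_set; last exact: Sh_Xd.
rewrite Sh_weightE // -EFinM /Sh tnth_tscale phiZ ?invr_gt0 ?Y_gt0 //.
by rewrite mulrAC mulVf ?mul1r // gt_eqF ?Y_gt0.
Qed.

Lemma anchored_rho : anchored H rho.
Proof.
split=> [|j]; first exact: rho_Xd.
have mj : measurable_fun setT (fun x : pt R d.-1 => (tnth x j)%:E).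
  by apply/measurable_EFinP; exact: measurable_tnth.
have posE (f : pt R d.-1 -> R) x : ((EFin \o f)^\+ x = (Num.max (f x) 0)%:E).
  by rewrite funeposE EFin_max.
have negE (f : pt R d.-1 -> R) x : ((EFin \o f)^\- x = (Num.max (- f x) 0)%:E).
  by rewrite funenegE EFin_max.
have max_ge0 (a : R) : (0 <= Num.max a 0)%R by rewrite le_max lexx orbT.
have maxZ (c a : R) : (0 < c)%R -> (Num.max (c * a) 0 = c * Num.max a 0)%R.
  by move=> c0; rewrite maxr_pMr ?ltW // mulr0.
split.
  apply/integrableP; split; first exact: measurable_funTS.
  under eq_integral do rewrite abse_EFin.
  rewrite (integral_rho_homogeneous (phi := Num.norm)) //.
    by have /integrableP[_] := eta_mom j; under eq_integral do rewrite abse_EFin.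
  by move=> c a c0; rewrite normrM gtr0_norm.
rewrite integralE; under eq_integral do rewrite posE.
under [X in _ - X]eq_integral do rewrite negE.
rewrite (integral_rho_homogeneous (phi := fun a => Num.max a 0%R)) //; last exact: measurable_maxr.
rewrite (integral_rho_homogeneous (phi := fun a => Num.max (- a)%R 0%R)) //; first last.
- by move=> c a c0; rewrite -mulrN maxZ.
- by apply: measurable_maxr => //; exact: measurable_funN.
by rewrite -(eta_mean j) [RHS]integralE; congr (_ - _); apply: eq_integral => y _;
  rewrite ?posE ?negE.
Qed.

Lemma fiber_rho : fiber_is H h rho eta.
Proof.
move=> B mB; rewrite fiber_domE.
have mD : measurable (Th_dom H h `&` Th h @^-1` B).
  by apply: measurableI; [exact: measurable_Th_dom | exact: measurable_funPTI].
have mF : measurable_fun setT ((fun x => (1 + dot h x)%:E) \_ (Th_dom H h `&` Th h @^-1` B)).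
  apply/(measurable_restrictT _ mD); apply/measurable_funTS/measurable_EFinP.
  by apply: measurable_funD => //; exact: measurable_dot.
rewrite integral_mkcond /rho ge0_integral_push_density //; first last.
- by move=> x; apply: erestrict_ge0 => y [[_ /ltW]].
- exact: integral_Sh_weight.
transitivity (\int[eta]_y (\1_B y)%:E); last by rewrite integral_indic // setIT.
apply: (eq_integral_full (measurable_Yh H h) etaY) => //.
- apply: emeasurable_funM; first exact: measurableT_comp (measurable_Sh h).
  by apply/measurable_EFinP; exact: measurable_Sh_weight.
- by apply/measurable_EFinP; exact: measurable_indic.
move=> y Yy; rewrite Sh_weightE // patchE indicE.
have Sy_dom : Th_dom H h (Sh h y).
  by split; [exact: Sh_Xd | rewrite dot_Sh // invr_gt0 Y_gt0].
have [By|nBy] := boolP (y \in B).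
  rewrite mem_set /=; last by rewrite ThK //; split => //; exact: set_mem.
  by rewrite dot_Sh // -EFinM mulVf // gt_eqF ?Y_gt0.
by rewrite memNset ?mul0e // => -[_] /=; rewrite ThK // => /mem_set; exact/negP.
Qed.

End existence.

Section uniqueness.
Context (R : realType) (d : nat) (H : 'M[R]_(d, d.-1)) (h : pt R d.-1).
Hypothesis d_gt0 : (0 < d)%N.
Hypothesis Horth : orthonormal_cols H.
Hypothesis Hspan : spans_Td H.
Variables eta rho' : probability (pt R d.-1) R.
Hypothesis rho'_fiber : fiber_is H h rho' eta.

Local Notation Y := (Yh H h).
Local Notation D := (Th_dom H h).

Let Y_gt0 y : Y y -> 0 < 1 - dot h y. Proof. exact: Yh_gt0. Qed.

(* the weight 1 + h^T x, cut off outside the domain where T_h is used *)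
Definition Th_weight (x : pt R d.-1) : R := \1_D x * (1 + dot h x).

Lemma measurable_Th_weight : measurable_fun setT Th_weight.
Proof.
rewrite /Th_weight; apply: measurable_funM; first exact: measurable_indic (measurable_Th_dom H h).
by apply: measurable_funD => //; exact: measurable_dot.
Qed.

Lemma Th_weight_ge0 x : 0 <= Th_weight x.
Proof.
rewrite /Th_weight indicE; have [/set_mem[_ /ltW]|] := boolP (x \in D).
  by rewrite mul1r.
by rewrite mul0r.
Qed.

Local Open Scope ereal_scope.

Lemma fiber_isE B : measurable B ->
  \int[rho']_(x in Th h @^-1` B) (Th_weight x)%:E = eta B.
Proof.
move=> mB; rewrite -(rho'_fiber mB) fiber_domE.
rewrite integral_mkcond [RHS]integral_mkcond; apply: eq_integral => x _.
by rewrite !epatch_indic /= /Th_weight -!EFinM indicI /=; congr EFin; ring.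
Qed.

Lemma integral_Th_weight : \int[rho']_x (Th_weight x)%:E = 1.
Proof. by have := fiber_isE measurableT; rewrite probability_setT. Qed.

Let mu := push_density rho' measurable_Th_weight Th_weight_ge0 (Th h).

Lemma mu_eta B : measurable B -> mu B = eta B.
Proof. by move=> mB; rewrite /mu push_densityE ?fiber_isE //; exact: integral_Th_weight. Qed.

Lemma rho'_setI_Th_dom A : measurable A -> rho' (A `&` D) = rho_of H h eta A.
Proof.
move=> mA; pose S := [set y | Y y /\ A (Sh h y)].
have mS : measurable S.
  by apply: measurableI; [exact: measurable_Yh | exact: measurable_funPTI].
have mF : measurable_fun setT ((fun y => (1 - dot h y)%:E) \_ S).
  apply/(measurable_restrictT _ mS); apply/measurable_funTS/measurable_EFinP.
  by apply: measurable_funB => //; exact: measurable_dot.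
rewrite /rho_of integral_mkcond (eq_measure_integral mu); last first.
  by move=> B mB _; apply/esym/mu_eta.
rewrite /mu ge0_integral_push_density //; first last.
- by move=> y; apply: erestrict_ge0 => z [/Y_gt0 /ltW].
- exact: integral_Th_weight.
transitivity (\int[rho']_(x in D) (\1_A x)%:E).
  by rewrite integral_indic //; exact: measurable_Th_dom.
rewrite integral_mkcond; apply: eq_integral => x _; rewrite !patchE /Th_weight !indicE.
have [/set_mem xD|nxD] := boolP (x \in D); last by rewrite mul0r mule0.
have x_pos : (0 < 1 + dot h x)%R by case: xD.
have -> : (Th h x \in S) = (x \in A).
  apply/idP/idP => [/set_mem[_]|/set_mem Ax]; first by rewrite ShK // => /mem_set.
  by apply/mem_set; split; [exact: Th_Yh xD.1 x_pos | rewrite ShK].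
case: (x \in A); last by rewrite mul0e.
by rewrite mul1r dot_Th // -EFinM mulVf // gt_eqF.
Qed.

Lemma fiber_determines_rho : rho_of H h eta setT = 1 ->
  forall A, measurable A -> rho' A = rho_of H h eta A.
Proof.
move=> rho_of1 A mA; rewrite -rho'_setI_Th_dom //.
apply: probability_setI_full => //; first exact: measurable_Th_dom.
by rewrite -[D]setTI rho'_setI_Th_dom.
Qed.

End uniqueness.

Theorem theorem3p6 (R : realType) (d : nat) (hd : (2 <= d)%N)
  (H : 'M[R]_(d, d.-1)) (Horth : orthonormal_cols H) (Hspan : spans_Td H)
  (h : pt R d.-1) (hint : interiorH H h)
  (eta : probability (pt R d.-1) R)
  (etaY : eta (Yh H h) = 1%E)
  (eta_mom : forall j : 'I_d.-1, eta.-integrable setT (fun y => (tnth y j)%:E))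
  (eta_mean : forall j : 'I_d.-1, (\int[eta]_y (tnth y j)%:E = 0)%E) :
  (exists rho : probability (pt R d.-1) R,
      (forall A, measurable A -> rho A = rho_of H h eta A) /\
      anchored H rho /\ fiber_is H h rho eta) /\
  (forall rho' : probability (pt R d.-1) R,
      anchored H rho' -> fiber_is H h rho' eta ->
      forall A, measurable A -> rho' A = rho_of H h eta A).
Proof.
have d_gt0 : (0 < d)%N by apply: leq_trans hd.
split.
  exists (rho h d_gt0 Horth Hspan eta); split=> [A _|]; first exact: rhoE.
  by split; [exact: anchored_rho | exact: fiber_rho].
move=> rho' _ rho'_fiber; apply: fiber_determines_rho => //.
exact: rho_of_setT.
Qed.
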